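(* Let $\mathscr T$ be a $\mathscr J$-theory, and let $\mu:V\to\mathscr T(J,J')$ and $\nu:W\to\mathscr T(K,K')$ be morphisms in $\mathscr V$ for objects $J,J',K,K'$ of $\mathscr J$. Then $\mu$ commutes with $\nu$ if and only if $\nu$ commutes with $\mu$.
   Context: $(\mathscr V,\otimes,I)$ is a closed symmetric monoidal category, $\underline{\mathscr V}$ the associated $\mathscr V$-category; everything is $\mathscr V$-enriched. A system of arities is a full sub-$\mathscr V$-category $\mathscr J\hookrightarrow\underline{\mathscr V}$ containing $I$ and closed under $\otimes$. A cotensor $[V,C]$ is an object with counit $V\to\mathscr C([V,C],C)$ inducing $\mathscr C(-,[V,C])\cong\underline{\mathscr V}(V,\mathscr C(-,C))$. A $\mathscr J$-theory is a $\mathscr V$-category $\mathscr T$ with $\mathrm{ob}\,\mathscr T=\mathrm{ob}\,\mathscr J$ and an identity-on-objects $\tau:\mathscr J^{\mathrm{op}}\to\mathscr T$ preserving cotensors by objects of $\mathscr J$. In $\mathscr T$, $J\otimes K$ is a cotensor of $K$ by $J$ with counit $J\xrightarrow{\mathrm{Coev}}\underline{\mathscr V}(K,J\otimes K)=\mathscr J^{\mathrm{op}}(J\otimes K,K)\xrightarrow{\tau}\mathscr T(J\otimes K,K)$, and $K\otimes J$ is a cotensor of $K$ by $J$ with counit $J\xrightarrow{\mathrm{Coev}'}\underline{\mathscr V}(K,K\otimes J)\xrightarrow{\tau}\mathscr T(K\otimes J,K)$ ($\mathrm{Coev}'$ = coevaluation composed with the symmetry); these induce $\mathscr V$-functors $[J,-]_\ell,[J,-]_r:\mathscr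 T\to\mathscr T$ ($K\mapsto J\otimes K$, $K\mapsto K\otimes J$), the unique ones with these object maps making the counits $\mathscr V$-natural. The first and second Kronecker products $\mathsf k,\tilde{\mathsf k}:\mathscr T(J,J')\otimes\mathscr T(K,K')\to\mathscr T(J\otimes K,J'\otimes K')$ are the composites $\mathscr T(J,J')\otimes\mathscr T(K,K')\xrightarrow{[K,-]_r\otimes[J',-]_\ell}\mathscr T(J\otimes K,J'\otimes K)\otimes\mathscr T(J'\otimes K,J'\otimes K')\xrightarrow{\text{comp}}\mathscr T(J\otimes K,J'\otimes K')$ and $\mathscr T(J,J')\otimes\mathscr T(K,K')\xrightarrow{[K',-]_r\otimes[J,-]_\ell}\mathscr T(J\otimes K',J'\otimes K')\otimes\mathscr T(J\otimes K,J\otimes K')\xrightarrow{\text{comp}}\mathscr T(J\otimes K,J'\otimes K')$. $\mu$ commutes with $\nu$ if $\mathsf k\cdot(\mu\otimes\nu)=\tilde{\mathsf k}\cdot(\mu\otimes\nu):V\otimes W\to\mathscr T(J\otimes K,J'\otimes K')$ (and $\nu$ commutes with $\mu$ means the analogous equation for $\nu\otimes\mu:W\otimes V\to\mathscr T(K\otimes J,K'\otimes J')$). *)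

Record Cat : Type := {
  ob :> Type;
  hom : ob -> ob -> Type;
  comp : forall a b c : ob, hom b c -> hom a b -> hom a c;
  idm : forall a : ob, hom a a;
  comp_idl : forall a b (f : hom a b), comp a b b (idm b) f = f;
  comp_idr : forall a b (f : hom a b), comp a a b f (idm a) = f;
  comp_assoc : forall a b c d (f : hom c d) (g : hom b c) (h : hom a b),
      comp a c d f (comp a b c g h) = comp a b d (comp b c d f g) h }.

Arguments hom {_} _ _.
Arguments comp {_ _ _ _} _ _.
Arguments idm {_} _.

Notation "g ∘ f" := (comp g f) (at level 40, left associativity).

Record SMCC (C : Cat) : Type := {
  tens : C -> C -> C;
  tensm : forall a a' b b' : C, hom a a' -> hom b b' -> hom (tens a b) (tens a' b');
  tensm_id : forall a b : C, tensm _ _ _ _ (idm a) (idm b) = idm (tens a b);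
  tensm_comp : forall (a a' a'' b b' b'' : C) (f : hom a' a'') (f' : hom a a')
      (g : hom b' b'') (g' : hom b b'),
      tensm _ _ _ _ (f ∘ f') (g ∘ g') = tensm _ _ _ _ f g ∘ tensm _ _ _ _ f' g';
  unit : C;
  alpha : forall a b c : C, hom (tens (tens a b) c) (tens a (tens b c));
  alpha_inv : forall a b c : C, hom (tens a (tens b c)) (tens (tens a b) c);
  alpha_inv_l : forall a b c, alpha_inv a b c ∘ alpha a b c = idm _;
  alpha_inv_r : forall a b c, alpha a b c ∘ alpha_inv a b c = idm _;
  alpha_nat : forall a a' b b' c c' (f : hom a a') (g : hom b b') (h : hom c c'),
      alpha a' b' c' ∘ tensm _ _ _ _ (tensm _ _ _ _ f g) h
      = tensm _ _ _ _ f (tensm _ _ _ _ g h) ∘ alpha a b c;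
  lam : forall a : C, hom (tens unit a) a;
  lam_inv : forall a : C, hom a (tens unit a);
  lam_inv_l : forall a, lam_inv a ∘ lam a = idm _;
  lam_inv_r : forall a, lam a ∘ lam_inv a = idm _;
  lam_nat : forall a a' (f : hom a a'), lam a' ∘ tensm _ _ _ _ (idm unit) f = f ∘ lam a;
  rho : forall a : C, hom (tens a unit) a;
  rho_inv : forall a : C, hom a (tens a unit);
  rho_inv_l : forall a, rho_inv a ∘ rho a = idm _;
  rho_inv_r : forall a, rho a ∘ rho_inv a = idm _;
  rho_nat : forall a a' (f : hom a a'), rho a' ∘ tensm _ _ _ _ f (idm unit) = f ∘ rho a;
  sigma : forall a b : C, hom (tens a b) (tens b a);
  sigma_nat : forall a a' b b' (f : hom a a') (g : hom b b'),
      sigma a' b' ∘ tensm _ _ _ _ f g = tensm _ _ _ _ g f ∘ sigma a b;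
  sigma_sigma : forall a b, sigma b a ∘ sigma a b = idm _;
  pentagon : forall a b c d : C,
      alpha a b (tens c d) ∘ alpha (tens a b) c d
      = tensm _ _ _ _ (idm a) (alpha b c d) ∘ alpha a (tens b c) d
        ∘ tensm _ _ _ _ (alpha a b c) (idm d);
  triangle : forall a b : C,
      tensm _ _ _ _ (idm a) (lam b) ∘ alpha a unit b = tensm _ _ _ _ (rho a) (idm b);
  hexagon : forall a b c : C,
      alpha b c a ∘ sigma a (tens b c) ∘ alpha a b c
      = tensm _ _ _ _ (idm b) (sigma a c) ∘ alpha b a c ∘ tensm _ _ _ _ (sigma a b) (idm c);
  ihom : C -> C -> C;
  ev : forall a b : C, hom (tens (ihom a b) a) b;
  curry : forall a b c : C, hom (tens c a) b -> hom c (ihom a b);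
  ev_curry : forall a b c (f : hom (tens c a) b),
      ev a b ∘ tensm _ _ _ _ (curry a b c f) (idm a) = f;
  curry_ev : forall a b c (g : hom c (ihom a b)),
      curry a b c (ev a b ∘ tensm _ _ _ _ g (idm a)) = g }.

Arguments tens {C} M _ _ : rename.
Arguments tensm {C} M {a a' b b'} _ _ : rename.
Arguments unit {C} M : rename.
Arguments alpha {C} M a b c : rename.
Arguments lam {C} M a : rename.
Arguments rho {C} M a : rename.
Arguments sigma {C} M a b : rename.
Arguments ihom {C} M _ _ : rename.
Arguments ev {C} M a b : rename.
Arguments curry {C} M {a b c} _ : rename.

Section Enriched.
Context {C : Cat} (M : SMCC C).

Local Notation "a ⊗ b" := (tens M a b) (at level 30, right associativity).
Local Notation "f ⊗m g" := (tensm M f g) (at level 30, right associativity).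

Definition Vcomp (a b c : C) : hom (ihom M b c ⊗ ihom M a b) (ihom M a c) :=
  curry M (ev M b c ∘ (idm _ ⊗m ev M a b) ∘ alpha M _ _ _).

Definition Vid (a : C) : hom (unit M) (ihom M a a) := curry M (lam M a).

(** Coevaluation  a -> [b, a ⊗ b]  and  Coev' = coevaluation followed by
    [b, symmetry] : a -> [b, b ⊗ a] (which is curry of the symmetry). *)
Definition Coev (a b : C) : hom a (ihom M b (a ⊗ b)) := curry M (idm (a ⊗ b)).
Definition Coev' (a b : C) : hom a (ihom M b (b ⊗ a)) := curry M (sigma M a b).

Record VCat (O : Type) : Type := {
  vhom : O -> O -> C;
  vcomp : forall a b c : O, hom (vhom b c ⊗ vhom a b) (vhom a c);
  vid : forall a : O, hom (unit M) (vhom a a);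
  vassoc : forall a b c d : O,
      vcomp a c d ∘ (idm (vhom c d) ⊗m vcomp a b c) ∘ alpha M _ _ _
      = vcomp a b d ∘ (vcomp b c d ⊗m idm (vhom a b));
  vunit_l : forall a b : O, vcomp a b b ∘ (vid b ⊗m idm (vhom a b)) = lam M _;
  vunit_r : forall a b : O, vcomp a a b ∘ (idm (vhom a b) ⊗m vid a) = rho M _ }.

Arguments vhom {O} _ _ _.
Arguments vcomp {O} _ _ _ _.
Arguments vid {O} _ _.

(** Given hom-objects H and composition cmp, the object X with
    counit e : v -> H(X,K) is a cotensor [v, K] iff for every Y the induced
    map  H(Y,X) -> [v, H(Y,K)]  is an isomorphism in V. *)
Definition cotensor_map {O : Type} (H : O -> O -> C)
    (cmp : forall a b c : O, hom (H b c ⊗ H a b) (H a c))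
    {X K : O} {v : C} (e : hom v (H X K)) (Y : O) : hom (H Y X) (ihom M v (H Y K)) :=
  curry M (cmp Y X K ∘ sigma M _ _ ∘ (idm (H Y X) ⊗m e)).

Definition is_cotensor {O : Type} (H : O -> O -> C)
    (cmp : forall a b c : O, hom (H b c ⊗ H a b) (H a c))
    {X K : O} {v : C} (e : hom v (H X K)) : Prop :=
  forall Y : O, exists psi : hom (ihom M v (H Y K)) (H Y X),
    psi ∘ cotensor_map H cmp e Y = idm _ /\ cotensor_map H cmp e Y ∘ psi = idm _.

(** ** Systems of arities: full sub-V-category of underline-V given by a class
    of objects containing I and closed under ⊗. *)
Record Arities : Type := {
  arity : C -> Prop;
  arity_unit : arity (unit M);
  arity_tens : forall a b : C, arity a -> arity b -> arity (a ⊗ b) }.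

Arguments arity_tens _ {a b} _ _.

Section Theories.
Variable P : Arities.

Definition JO : Type := { a : C | arity P a }.
Definition JV (A : JO) : C := proj1_sig A.

Definition Jtens (A B : JO) : JO :=
  exist _ (JV A ⊗ JV B) (arity_tens P (proj2_sig A) (proj2_sig B)).

(** The V-category J^op : J^op(A,B) = J(B,A) = [B,A], composition is that of
    underline-V precomposed with the symmetry. *)
Definition Jhom (A B : JO) : C := ihom M (JV B) (JV A).
Definition Jcomp (A B D : JO) : hom (Jhom B D ⊗ Jhom A B) (Jhom A D) :=
  Vcomp (JV D) (JV B) (JV A) ∘ sigma M _ _.
Definition Jid (A : JO) : hom (unit M) (Jhom A A) := Vid (JV A).

(** ** J-theories: a V-category T with ob T = ob J and an identity-on-objects
    V-functor tau : J^op -> T preserving cotensors by objects of J. *)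
Record Theory : Type := {
  th : VCat JO;
  tau : forall A B : JO, hom (Jhom A B) (vhom th A B);
  tau_comp : forall A B D : JO,
      tau A D ∘ Jcomp A B D = vcomp th A B D ∘ (tau B D ⊗m tau A B);
  tau_id : forall A : JO, tau A A ∘ Jid A = vid th A;
  tau_cotensor : forall (A X K : JO) (e : hom (JV A) (Jhom X K)),
      is_cotensor Jhom Jcomp e -> is_cotensor (vhom th) (vcomp th) (tau X K ∘ e) }.

Arguments tau _ _ _ : clear implicits.

Section InTheory.
Variable T : Theory.

Local Notation "T( A , B )" := (vhom (th T) A B).

(** Counits of the cotensors  J ⊗ K = [J, K]  and  K ⊗ J = [J, K]  in T. *)
Definition counit_l (A K : JO) : hom (JV A) T(Jtens A K, K) :=
  tau T (Jtens A K) K ∘ Coev (JV A) (JV K).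
Definition counit_r (A K : JO) : hom (JV A) T(Jtens K A, K) :=
  tau T (Jtens K A) K ∘ Coev' (JV A) (JV K).

(** Hom-actions of [A,-]_l (K |-> A ⊗ K) and [A,-]_r (K |-> K ⊗ A):
    they are characterized (uniquely, by the cotensor property) as the maps
    making the counits V-natural:  f ∘ e_K = e_K' ∘ [A,f]  internally. *)
Definition is_left_action
    (F : forall A K K' : JO, hom T(K, K') T(Jtens A K, Jtens A K')) : Prop :=
  forall A K K' : JO,
    vcomp (th T) (Jtens A K) K K' ∘ (idm T(K, K') ⊗m counit_l A K)
    = vcomp (th T) (Jtens A K) (Jtens A K') K' ∘ (counit_l A K' ⊗m F A K K')
      ∘ sigma M _ _.

Definition is_right_action
    (F : forall A K K' : JO, hom T(K, K') T(Jtens K A, Jtens K' A)) : Prop :=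
  forall A K K' : JO,
    vcomp (th T) (Jtens K A) K K' ∘ (idm T(K, K') ⊗m counit_r A K)
    = vcomp (th T) (Jtens K A) (Jtens K' A) K' ∘ (counit_r A K' ⊗m F A K K')
      ∘ sigma M _ _.

Definition kron1
    (Fl : forall A K K' : JO, hom T(K, K') T(Jtens A K, Jtens A K'))
    (Fr : forall A K K' : JO, hom T(K, K') T(Jtens K A, Jtens K' A))
    (J J' K K' : JO) :
    hom (T(J, J') ⊗ T(K, K')) T(Jtens J K, Jtens J' K') :=
  vcomp (th T) (Jtens J K) (Jtens J' K) (Jtens J' K') ∘ sigma M _ _
  ∘ (Fr K J J' ⊗m Fl J' K K').

Definition kron2
    (Fl : forall A K K' : JO, hom T(K, K') T(Jtens A K, Jtens A K'))
    (Fr : forall A K K' : JO, hom T(K, K') T(Jtens K A, Jtens K' A))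
    (J J' K K' : JO) :
    hom (T(J, J') ⊗ T(K, K')) T(Jtens J K, Jtens J' K') :=
  vcomp (th T) (Jtens J K) (Jtens J K') (Jtens J' K')
  ∘ (Fr K' J J' ⊗m Fl J K K').

(** mu commutes with nu :  k · (mu ⊗ nu) = k~ · (mu ⊗ nu), where k, k~ are
    built from THE functors [-,-]_l, [-,-]_r (quantifying over all families
    satisfying their defining property; such families exist and are unique
    in a J-theory). *)
Definition commutes_with {V W : C} {J J' K K' : JO}
    (mu : hom V T(J, J')) (nu : hom W T(K, K')) : Prop :=
  forall Fl Fr, is_left_action Fl -> is_right_action Fr ->
    kron1 Fl Fr J J' K K' ∘ (mu ⊗m nu) = kron2 Fl Fr J J' K K' ∘ (mu ⊗m nu).

End InTheory.
End Theories.
End Enriched.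

Arguments Theory {C M} P.
Arguments JO {C M} P.
Arguments vhom {C M O} v _ _.
Arguments th {C M P} t.
Arguments commutes_with {C M P} T {V W J J' K K'} mu nu.


(* In a J-theory T, tau sends the symmetry of V to mutually inverse
   isomorphisms J ⊗ K ≅ K ⊗ J in T, and these carry the counit of the
   cotensor K ⊗ J to that of J ⊗ K.  Conjugating by them therefore turns any
   hom-action making the right counits natural into one making the left
   counits natural, and conversely.  Under this conjugation the first
   Kronecker product on ν ⊗ μ becomes the second Kronecker product on μ ⊗ ν,
   precomposed with the symmetry W ⊗ V ≅ V ⊗ W, so the two commutation
   conditions are equivalent. *)

Section SymmetricMonoidal.
Context {C : Cat} (M : SMCC C).
Local Notation "a ⊠ b" := (tens M a b) (at level 30, right associativity).
Local Notation "f ⊗ g" := (tensm M f g) (at level 30, right associativity).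
Local Notation I := (unit M).

Lemma compA {a b c d : C} (f:hom c d) (g : hom b c) (h : hom a b) : f ∘ (g ∘ h) = f ∘ g ∘ h.
Proof. apply comp_assoc. Qed.
Lemma id_comp {a b : C} (f : hom a b) : idm b ∘ f = f. Proof. apply comp_idl. Qed.
Lemma comp_id {a b : C} (f : hom a b) : f ∘ idm a = f. Proof. apply comp_idr. Qed.
Lemma rewrite_prefix2 {b c d : C} {f : hom c d} {g : hom b c} {k : hom b d} :
  f ∘ g = k -> forall e (h : hom d e), h ∘ f ∘ g = h ∘ k.
Proof. intros E e h. rewrite <- compA, E. reflexivity. Qed.
Lemma rewrite_prefix3 {a b c d : C} {f : hom c d} {g : hom b c} {g' : hom a b} {k : hom a d} :
  f ∘ g ∘ g' = k -> forall e (h : hom d e), h ∘ f ∘ g ∘ g' = h ∘ k.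
Proof. intros E e h. rewrite <- !compA, (compA f), E. reflexivity. Qed.

Lemma rewrite_prefix4 {a0 a b c d : C}
    {f : hom c d} {g : hom b c} {g' : hom a b} {g'' : hom a0 a} {k : hom a0 d} :
  f ∘ g ∘ g' ∘ g'' = k -> forall e (h : hom d e), h ∘ f ∘ g ∘ g' ∘ g'' = h ∘ k.
Proof. intros E e h. rewrite <- !compA, (compA f), (compA (f ∘ g)), E. reflexivity. Qed.
(* [rw E] rewrites with [E : f ∘ g ∘ ... = k] also when [f ∘ g ∘ ...] occurs as
   a prefix of a left-associated composite. *)
Ltac norm := repeat rewrite compA.
Tactic Notation "rw" uconstr(E) :=
  first [ rewrite E | erewrite (rewrite_prefix2 E)
        | erewrite (rewrite_prefix3 E) | erewrite (rewrite_prefix4 E) ]; norm.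

Lemma tensm_compE {a a' a'' b b' b'' : C}
    (f : hom a' a'') (f' : hom a a') (g : hom b' b'') (g' : hom b b') :
  (f ∘ f') ⊗ (g ∘ g') = (f ⊗ g) ∘ (f' ⊗ g').
Proof. apply tensm_comp. Qed.
Lemma tensm_idE (a b : C) : idm a ⊗ idm b = idm (a ⊠ b). Proof. apply tensm_id. Qed.
Lemma tensm_comp_l {a a' a'' : C} (c : C) (f : hom a' a'') (f' : hom a a') :
  (f ∘ f') ⊗ idm c = (f ⊗ idm c) ∘ (f' ⊗ idm c).
Proof. rewrite <- tensm_compE, id_comp. reflexivity. Qed.
Lemma tensm_comp_r {a a' a'' : C} (c : C) (f : hom a' a'') (f' : hom a a') :
  idm c ⊗ (f ∘ f') = (idm c ⊗ f) ∘ (idm c ⊗ f').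
Proof. rewrite <- tensm_compE, id_comp. reflexivity. Qed.
Lemma tensm_split {a a' b b' : C} (f : hom a a') (g : hom b b') :
  f ⊗ g = (f ⊗ idm b') ∘ (idm a ⊗ g).
Proof. rewrite <- tensm_compE, id_comp, comp_id. reflexivity. Qed.
Lemma tensm_split' {a a' b b' : C} (f : hom a a') (g : hom b b') :
  f ⊗ g = (idm a' ⊗ g) ∘ (f ⊗ idm b).
Proof. rewrite <- tensm_compE, id_comp, comp_id. reflexivity. Qed.

Lemma cancel_split_epi {a b c : C} (i : hom a b) (j : hom b a) (f g : hom b c) :
  i ∘ j = idm b -> f ∘ i = g ∘ i -> f = g.
Proof. intros E H. rewrite <- (comp_id f), <- (comp_id g), <- E, !compA, H. reflexivity. Qed.
Lemma cancel_split_mono {a b c : C} (i : hom b c) (j : hom c b) (f g : hom a b) :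
  j ∘ i = idm b -> i ∘ f = i ∘ g -> f = g.
Proof. intros E H. rewrite <- (id_comp f), <- (id_comp g), <- E, <- !compA, H. reflexivity. Qed.

Lemma tensm_unit_l_inj {a b : C} (f g : hom a b) : idm I ⊗ f = idm I ⊗ g -> f = g.
Proof.
  intro H. rewrite <- (comp_id f), <- (comp_id g), <- (lam_inv_r C M a), !compA,
    <- !(lam_nat C M), H. reflexivity.
Qed.
Lemma tensm_unit_r_inj {a b : C} (f g : hom a b) : f ⊗ idm I = g ⊗ idm I -> f = g.
Proof.
  intro H. rewrite <- (comp_id f), <- (comp_id g), <- (rho_inv_r C M a), !compA,
    <- !(rho_nat C M), H. reflexivity.
Qed.

(* Kelly's redundant coherence axioms. *)
Lemma lam_tens_alpha (a b : C) : lam M (a ⊠ b) ∘ alpha M I a b = lam M a ⊗ idm b.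
Proof.
  apply tensm_unit_l_inj.
  apply (cancel_split_epi (alpha M I (I ⊠ a) b ∘ (alpha M I I a ⊗ idm b))
                  ((alpha_inv C M I I a ⊗ idm b) ∘ alpha_inv C M I (I ⊠ a) b)).
  { norm. rw (eq_sym (tensm_comp_l b (alpha M I I a) (alpha_inv C M I I a))).
    rewrite (alpha_inv_r C M), tensm_idE, comp_id, (alpha_inv_r C M). reflexivity. }
  rewrite tensm_comp_r. norm.
  rw (eq_sym (pentagon C M I I a b)).
  rewrite (triangle C M I (a ⊠ b)).
  rewrite <- (tensm_idE a b), <- (alpha_nat C M).
  rewrite <- (triangle C M I a), tensm_comp_l. norm.
  rewrite (alpha_nat C M). reflexivity.
Qed.

Lemma alpha_rho_tens (a b : C) : (idm a ⊗ rho M b) ∘ alpha M a b I = rho M (a ⊠ b).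
Proof.
  apply tensm_unit_r_inj.
  apply (cancel_split_mono (alpha M a b I) (alpha_inv C M a b I)); [apply alpha_inv_l|].
  rewrite <- (triangle C M (a ⊠ b) I).
  rewrite <- (tensm_idE a b). norm.
  rewrite (alpha_nat C M).
  rw (pentagon C M a b I I).
  rewrite <- tensm_comp_r. rewrite (triangle C M b I).
  rewrite <- (alpha_nat C M). rewrite <- compA, <- tensm_comp_l. reflexivity.
Qed.

Lemma lam_unit_tens (a : C) : lam M (I ⊠ a) = idm I ⊗ lam M a.
Proof.
  apply (cancel_split_mono (lam M a) (lam_inv C M a)); [apply lam_inv_l|].
  symmetry. apply lam_nat.
Qed.

Lemma lam_unit_eq_rho_unit : lam M I = rho M I.
Proof.
  apply tensm_unit_r_inj. rewrite <- lam_tens_alpha, <- (triangle C M I I), lam_unit_tens.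
  reflexivity.
Qed.

Lemma lam_sigma (a : C) : lam M a ∘ sigma M a I = rho M a.
Proof.
  apply tensm_unit_r_inj.
  apply (cancel_split_mono (sigma M a I) (sigma M I a)); [apply sigma_sigma|].
  assert (hex := f_equal (fun h => lam M (I ⊠ a) ∘ h) (hexagon C M a I I)).
  simpl in hex. repeat rewrite compA in hex. norm.
  rewrite (lam_tens_alpha I a) in hex. rewrite <- (sigma_nat C M) in hex.
  repeat rewrite compA in hex. rewrite (rewrite_prefix2 (triangle C M a I)) in hex.
  rewrite (lam_nat C M) in hex. repeat rewrite compA in hex.
  rewrite (rewrite_prefix2 (lam_tens_alpha a I)) in hex.
  rewrite <- compA, <- tensm_comp_l in hex. symmetry. exact hex.
Qed.

Lemma sigma_unit_unit : sigma M I I = idm (I ⊠ I).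
Proof.
  apply (cancel_split_mono (lam M I) (lam_inv C M I)); [apply lam_inv_l|].
  rewrite lam_sigma, comp_id, lam_unit_eq_rho_unit. reflexivity.
Qed.

Lemma tensm_interchange {a a' b b' : C} (f : hom a a') (g : hom b b') :
  (idm a' ⊗ g) ∘ (f ⊗ idm b) = (f ⊗ idm b') ∘ (idm a ⊗ g).
Proof. rewrite <- tensm_split, <- tensm_split'. reflexivity. Qed.

Lemma lam_inv_nat {a b : C} (f : hom a b) : lam_inv C M b ∘ f = (idm I ⊗ f) ∘ lam_inv C M a.
Proof.
  apply (cancel_split_mono (lam M b) (lam_inv C M b)); [apply lam_inv_l|].
  norm. rewrite (lam_inv_r C M), id_comp, (lam_nat C M), <- compA, (lam_inv_r C M), comp_id.
  reflexivity.
Qed.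
Lemma rho_inv_nat {a b : C} (f : hom a b) : rho_inv C M b ∘ f = (f ⊗ idm I) ∘ rho_inv C M a.
Proof.
  apply (cancel_split_mono (rho M b) (rho_inv C M b)); [apply rho_inv_l|].
  norm. rewrite (rho_inv_r C M), id_comp, (rho_nat C M), <- compA, (rho_inv_r C M), comp_id.
  reflexivity.
Qed.

Lemma alpha_lam_inv (a b : C) : alpha M I a b ∘ (lam_inv C M a ⊗ idm b) = lam_inv C M (a ⊠ b).
Proof.
  apply (cancel_split_mono (lam M (a ⊠ b)) (lam_inv C M (a ⊠ b))); [apply lam_inv_l|].
  norm. rewrite lam_tens_alpha, <- tensm_comp_l, (lam_inv_r C M), tensm_idE, (lam_inv_r C M).
  reflexivity.
Qed.
Lemma alpha_rho_inv (a b : C) : alpha M a b I ∘ rho_inv C M (a ⊠ b) = idm a ⊗ rho_inv C M b.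
Proof.
  apply (cancel_split_mono (idm a ⊗ rho M b) (idm a ⊗ rho_inv C M b)).
  { rewrite <- tensm_comp_r, (rho_inv_l C M), tensm_idE. reflexivity. }
  norm. rewrite alpha_rho_tens, (rho_inv_r C M), <- tensm_comp_r, (rho_inv_r C M), tensm_idE.
  reflexivity.
Qed.
Lemma triangle_inv (a b : C) :
  alpha M a I b ∘ (rho_inv C M a ⊗ idm b) = idm a ⊗ lam_inv C M b.
Proof.
  apply (cancel_split_mono (idm a ⊗ lam M b) (idm a ⊗ lam_inv C M b)).
  { rewrite <- tensm_comp_r, (lam_inv_l C M), tensm_idE. reflexivity. }
  norm.
  rewrite (triangle C M), <- tensm_comp_l, (rho_inv_r C M), <- tensm_comp_r, (lam_inv_r C M).
  rewrite !tensm_idE.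
  reflexivity.
Qed.
Lemma lam_inv_unit_eq_rho_inv_unit : lam_inv C M I = rho_inv C M I.
Proof.
  apply (cancel_split_mono (lam M I) (lam_inv C M I)); [apply lam_inv_l|].
  rewrite (lam_inv_r C M), lam_unit_eq_rho_unit, (rho_inv_r C M). reflexivity.
Qed.

Section PointComposition.
Context {O : Type} (H : VCat M O).
Local Notation hh a b := (vhom H a b).
Local Notation vc a b c := (vcomp M O H a b c).

(* Points [I -> H(b, c)] act on hom-objects by composition, like morphisms of the
   underlying category. *)
Definition postcomp {a b c : O} (p : hom I (hh b c)) : hom (hh a b) (hh a c) :=
  vc a b c ∘ (p ⊗ idm (hh a b)) ∘ lam_inv C M (hh a b).
Definition precomp {a b c : O} (q : hom I (hh a b)) : hom (hh b c) (hh a c) :=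
  vc a b c ∘ (idm (hh b c) ⊗ q) ∘ rho_inv C M (hh b c).
Definition point_comp {a b c : O} (p : hom I (hh b c)) (q : hom I (hh a b)) : hom I (hh a c) :=
  vc a b c ∘ (p ⊗ q) ∘ rho_inv C M I.

Lemma vcomp_postcomp_l {a b c d : O} (p : hom I (hh c d)) :
  vc a b d ∘ (postcomp p ⊗ idm (hh a b)) = postcomp p ∘ vc a b c.
Proof.
  unfold postcomp. rewrite !tensm_comp_l. norm.
  rewrite <- (vassoc M O H).
  rw (alpha_nat C M _ _ _ _ _ _ _ _ _). rewrite tensm_idE. rw (alpha_lam_inv (hh b c) (hh a b)).
  rw (lam_inv_nat _). rw (tensm_interchange p (vc a b c)). reflexivity.
Qed.

Lemma vcomp_precomp_r {a' a b c : O} (q : hom I (hh a' a)) :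
  vc a' b c ∘ (idm (hh b c) ⊗ precomp q) = precomp q ∘ vc a b c.
Proof.
  unfold precomp. rewrite !tensm_comp_r. norm.
  rewrite <- (alpha_rho_inv (hh b c) (hh a b)). norm.
  rw (eq_sym (alpha_nat C M _ _ _ _ _ _ (idm (hh b c)) (idm (hh a b)) q)).
  rw (vassoc M O H a' a b c).
  rewrite tensm_idE. rw (eq_sym (tensm_interchange (vc a b c) q)).
  rw (eq_sym (rho_inv_nat (vc a b c))). reflexivity.
Qed.

Lemma vcomp_precomp_postcomp {a b b' c : O} (q : hom I (hh b b')) :
  vc a b c ∘ (precomp q ⊗ idm (hh a b)) = vc a b' c ∘ (idm (hh b' c) ⊗ postcomp q).
Proof.
  unfold precomp, postcomp. rewrite !tensm_comp_l, !tensm_comp_r. norm.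
  rewrite <- (vassoc M O H). rw (alpha_nat C M _ _ _ _ _ _ _ _ _).
  rw (triangle_inv (hh b' c) (hh a b)). reflexivity.
Qed.

Lemma postcomp_comp {a b c d : O} (p1 : hom I (hh c d)) (p2 : hom I (hh b c)) :
  @postcomp a c d p1 ∘ postcomp p2 = postcomp (point_comp p1 p2).
Proof.
  unfold postcomp, point_comp. norm.
  rw (lam_inv_nat (vc a b c)).
  rw (eq_sym (tensm_interchange p1 (vc a b c))).
  rw (lam_inv_nat (p2 ⊗ idm (hh a b))).
  rw (lam_inv_nat (lam_inv C M (hh a b))).
  rw (eq_sym (triangle_inv I (hh a b))).
  rw (eq_sym (tensm_split p1 (p2 ⊗ idm (hh a b)))).
  rw (eq_sym (alpha_nat C M _ _ _ _ _ _ p1 p2 (idm (hh a b)))).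
  rw (vassoc M O H a b c d).
  rewrite !tensm_comp_l. norm. reflexivity.
Qed.

Lemma precomp_comp {a' a b c : O} (q1 : hom I (hh a' a)) (q2 : hom I (hh a b)) :
  @precomp a' a c q1 ∘ @precomp a b c q2 = precomp (point_comp q2 q1).
Proof.
  unfold precomp, point_comp. norm.
  rw (rho_inv_nat (vc a b c)).
  rw (tensm_interchange (vc a b c) q1).
  rw (eq_sym (vassoc M O H a' a b c)).
  rw (rho_inv_nat (idm (hh b c) ⊗ q2)).
  rw (eq_sym (tensm_split' (idm (hh b c) ⊗ q2) q1)).
  rw (alpha_nat C M _ _ _ _ _ _ (idm (hh b c)) q2 q1).
  rw (rho_inv_nat (rho_inv C M (hh b c))).
  rw (triangle_inv (hh b c) I).
  rewrite lam_inv_unit_eq_rho_inv_unit, !tensm_comp_r. norm. reflexivity.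
Qed.

Lemma postcomp_precomp {a b c d : O} (p : hom I (hh c d)) (q : hom I (hh a b)) :
  @postcomp a c d p ∘ @precomp a b c q = @precomp a b d q ∘ @postcomp b c d p.
Proof.
  unfold precomp, postcomp. norm.
  rw (lam_inv_nat (vc a b c)).
  rw (eq_sym (tensm_interchange p (vc a b c))).
  rw (lam_inv_nat (idm (hh b c) ⊗ q)).
  rw (lam_inv_nat (rho_inv C M (hh b c))).
  rw (rho_inv_nat (vc b c d)).
  rw (tensm_interchange (vc b c d) q).
  rw (eq_sym (vassoc M O H a b c d)).
  rw (rho_inv_nat (p ⊗ idm (hh b c))).
  rw (tensm_interchange (p ⊗ idm (hh b c)) q).
  rw (alpha_nat C M _ _ _ _ _ _ p (idm (hh b c)) (idm (hh a b))).
  rewrite tensm_idE.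
  rewrite <- (tensm_idE I (hh b c)).
  rw (alpha_nat C M _ _ _ _ _ _ (idm I) (idm (hh b c)) q).
  rw (rho_inv_nat (lam_inv C M (hh b c))).
  rw (alpha_lam_inv (hh b c) I).
  rw (lam_inv_nat (rho_inv C M (hh b c))).
  reflexivity.
Qed.

Lemma postcomp_id {a b : O} : @postcomp a b b (vid M O H b) = idm (hh a b).
Proof. unfold postcomp. rewrite (vunit_l M O H), (lam_inv_r C M). reflexivity. Qed.
Lemma precomp_id {a b : O} : @precomp a a b (vid M O H a) = idm (hh a b).
Proof. unfold precomp. rewrite (vunit_r M O H), (rho_inv_r C M). reflexivity. Qed.

Lemma vcomp_conj {X Y : C} {a' a b b' c c' : O}
  (p1 : hom I (hh c c')) (q1 : hom I (hh b' b)) (F : hom X (hh b c))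
  (p2 : hom I (hh b b')) (q2 : hom I (hh a' a)) (G : hom Y (hh a b)) :
  point_comp q1 p2 = vid M O H b ->
  vc a' b' c' ∘ ((postcomp p1 ∘ precomp q1 ∘ F) ⊗ (postcomp p2 ∘ precomp q2 ∘ G))
  = postcomp p1 ∘ precomp q2 ∘ vc a b c ∘ (F ⊗ G).
Proof.
  intro Hv. rewrite tensm_compE.
  rewrite (tensm_split (postcomp p1 ∘ precomp q1)), tensm_comp_l, tensm_comp_r. norm.
  rw (vcomp_postcomp_l p1). rw (vcomp_precomp_postcomp q1).
  rw (eq_sym (tensm_comp_r _ (postcomp q1) (postcomp p2))).
  rewrite postcomp_comp, Hv, postcomp_id, tensm_idE, comp_id. rw (vcomp_precomp_r q2). reflexivity.
Qed.

Lemma conj_inv {a a' b b' : O} (pa : hom I (hh b' a')) (qb : hom I (hh a b))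
  (pc : hom I (hh a' b')) (qd : hom I (hh b a)) :
  point_comp pa pc = vid M O H a' -> point_comp qd qb = vid M O H a ->
  postcomp pa ∘ precomp qb ∘ (postcomp pc ∘ precomp qd) = idm (hh a a').
Proof.
  intros H1 H2. norm. rw (eq_sym (postcomp_precomp pc qb)).
  rewrite postcomp_comp, H1, postcomp_id, id_comp.
  rewrite precomp_comp, H2, precomp_id. reflexivity.
Qed.
End PointComposition.

Lemma curry_nat {a b c c' : C} (f : hom (c ⊠ a) b) (g : hom c' c) :
  curry M f ∘ g = curry M (f ∘ (g ⊗ idm a)).
Proof.
  rewrite <- (curry_ev C M a b c' (curry M f ∘ g)). f_equal.
  rewrite tensm_comp_l. norm. rewrite (ev_curry C M). reflexivity.
Qed.
Definition sym_point (x y : C) : hom I (ihom M (x ⊠ y) (y ⊠ x)) :=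
  curry M (sigma M x y ∘ lam M (x ⊠ y)).

Lemma Vcomp_sym_point_inv (x y : C) :
  Vcomp M (x ⊠ y) (y ⊠ x) (x ⊠ y) ∘ sigma M _ _ ∘ (sym_point x y ⊗ sym_point y x)
    ∘ rho_inv C M I
  = Vid M (x ⊠ y).
Proof.
  unfold Vcomp, Vid. rewrite !curry_nat. f_equal.
  rw (eq_sym (tensm_comp_l _ (sigma M _ _) (sym_point x y ⊗ sym_point y x))).
  rewrite (sigma_nat C M), sigma_unit_unit, comp_id.
  rw (alpha_nat C M _ _ _ _ _ _ _ _ _).
  rewrite (tensm_split (sym_point y x) (sym_point x y ⊗ idm (x ⊠ y))). norm.
  rw (tensm_interchange (sym_point y x) (ev M _ _)).
  rw (eq_sym (tensm_comp_r _ (ev M _ _) (sym_point x y ⊗ idm (x ⊠ y)))).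
  unfold sym_point. rewrite !(ev_curry C M).
  rewrite tensm_comp_r. norm. rw (lam_nat C M _ _ (sigma M x y)).
  rewrite (sigma_sigma C M), id_comp.
  rw (triangle_inv I (x ⊠ y)). rw (eq_sym (tensm_comp_r _ _ _)).
  rewrite (lam_inv_r C M), tensm_idE, comp_id. reflexivity.
Qed.

Lemma Vcomp_Coev'_sym_point (a k : C) :
  Vcomp M k (k ⊠ a) (a ⊠ k) ∘ sigma M _ _ ∘ (Coev' M a k ⊗ sym_point k a)
    ∘ rho_inv C M a
  = Coev M a k.
Proof.
  unfold Vcomp, Coev. rewrite !curry_nat. f_equal.
  rw (eq_sym (tensm_comp_l _ (sigma M _ _) (Coev' M a k ⊗ sym_point k a))).
  rewrite (sigma_nat C M), !tensm_comp_l. norm.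
  rw (alpha_nat C M _ _ _ _ _ _ _ _ _).
  rewrite (tensm_split (sym_point k a) (Coev' M a k ⊗ idm k)). norm.
  rw (tensm_interchange (sym_point k a) (ev M _ _)).
  rw (eq_sym (tensm_comp_r _ (ev M _ _) (Coev' M a k ⊗ idm k))).
  unfold Coev', sym_point. rewrite !(ev_curry C M).
  rw (lam_nat C M _ _ (sigma M a k)). rewrite (sigma_sigma C M), id_comp.
  rw (lam_tens_alpha a k). rw (eq_sym (tensm_comp_l _ _ _)). rw (eq_sym (tensm_comp_l _ _ _)).
  rewrite lam_sigma, (rho_inv_r C M), tensm_idE. reflexivity.
Qed.

Section Swaps.
Context (P : Arities M) (T : Theory P).
Local Notation hh a b := (vhom (th T) a b).
Local Notation "A ⊕ B" := (Jtens M P A B) (at level 30).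
Local Notation tauT := (tau M P T).

Definition swap_point (X Y : JO P) : hom I (hh (X ⊕ Y) (Y ⊕ X)) :=
  tauT (X ⊕ Y) (Y ⊕ X) ∘ sym_point (JV M P Y) (JV M P X).

Lemma swap_point_inv (X Y : JO P) :
  point_comp (th T) (swap_point Y X) (swap_point X Y) = vid M _ (th T) (X ⊕ Y).
Proof.
  unfold point_comp, swap_point. rewrite tensm_compE. norm. rewrite <- (tau_comp M P T).
  unfold Jcomp. norm.
  cbn [JV Jtens proj1_sig].
  rw (Vcomp_sym_point_inv (JV M P X) (JV M P Y)).
  exact (tau_id M P T (X ⊕ Y)).
Qed.

Lemma counit_l_of_r (A K : JO P) :
  counit_l M P T A K = precomp (th T) (swap_point A K) ∘ counit_r M P T A K.
Proof.
  unfold counit_l, counit_r, precomp, swap_point. norm.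
  rw (rho_inv_nat (tauT (K ⊕ A) K)). rw (rho_inv_nat (Coev' M (JV M P A) (JV M P K))).
  rw (eq_sym (tensm_split' (tauT (K ⊕ A) K) (tauT (A ⊕ K) (K ⊕ A) ∘ sym_point _ _))).
  rw (eq_sym (tensm_compE (tauT (K ⊕ A) K) (Coev' M _ _) _ (idm I))).
  rewrite comp_id, (tensm_compE (tauT (K ⊕ A) K) _ (tauT (A ⊕ K) (K ⊕ A))). norm.
  rw (eq_sym (tau_comp M P T (A ⊕ K) (K ⊕ A) K)). unfold Jcomp. norm. cbn [JV Jtens proj1_sig].
  rw (Vcomp_Coev'_sym_point (JV M P A) (JV M P K)). reflexivity.
Qed.

Lemma counit_r_of_l (A K : JO P) :
  counit_r M P T A K = precomp (th T) (swap_point K A) ∘ counit_l M P T A K.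
Proof.
  rewrite counit_l_of_r. norm. rewrite (precomp_comp (th T)), swap_point_inv, precomp_id, id_comp.
  reflexivity.
Qed.

Definition left_of_right_action
    (Fr : forall A K K' : JO P, hom (hh K K') (hh (K ⊕ A) (K' ⊕ A))) (A K K' : JO P) :
    hom (hh K K') (hh (A ⊕ K) (A ⊕ K')) :=
  postcomp (th T) (swap_point K' A) ∘ precomp (th T) (swap_point A K) ∘ Fr A K K'.
Definition right_of_left_action
    (Fl : forall A K K' : JO P, hom (hh K K') (hh (A ⊕ K) (A ⊕ K'))) (A K K' : JO P) :
    hom (hh K K') (hh (K ⊕ A) (K' ⊕ A)) :=
  postcomp (th T) (swap_point A K') ∘ precomp (th T) (swap_point K A) ∘ Fl A K K'.

Lemma is_left_action_of_right Fr :
  is_right_action M P T Fr -> is_left_action M P T (left_of_right_action Fr).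
Proof.
  intros HR A K K'. unfold left_of_right_action.
  rewrite (counit_l_of_r A K).
  rewrite (tensm_split (counit_l M P T A K') _), !tensm_comp_r. norm.
  rw (eq_sym (tensm_interchange (counit_l M P T A K') (postcomp (th T) (swap_point K' A)))).
  rw (eq_sym (vcomp_precomp_postcomp (th T) (swap_point K' A))).
  rw (eq_sym (tensm_comp_l _ (precomp (th T) (swap_point K' A)) (counit_l M P T A K'))).
  rewrite <- counit_r_of_l.
  rw (eq_sym (tensm_interchange (counit_r M P T A K') (precomp (th T) (swap_point A K)))).
  rw (vcomp_precomp_r (th T) (swap_point A K)).
  rw (eq_sym (tensm_split (counit_r M P T A K') (Fr A K K'))).
  rw (vcomp_precomp_r (th T) (swap_point A K)).
  rw (eq_sym (HR A K K')).
  reflexivity.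
Qed.

Lemma is_right_action_of_left Fl :
  is_left_action M P T Fl -> is_right_action M P T (right_of_left_action Fl).
Proof.
  intros HL A K K'. unfold right_of_left_action.
  rewrite (counit_r_of_l A K).
  rewrite (tensm_split (counit_r M P T A K') _), !tensm_comp_r. norm.
  rw (eq_sym (tensm_interchange (counit_r M P T A K') (postcomp (th T) (swap_point A K')))).
  rw (eq_sym (vcomp_precomp_postcomp (th T) (swap_point A K'))).
  rw (eq_sym (tensm_comp_l _ (precomp (th T) (swap_point A K')) (counit_r M P T A K'))).
  rewrite <- counit_l_of_r.
  rw (eq_sym (tensm_interchange (counit_l M P T A K') (precomp (th T) (swap_point K A)))).
  rw (vcomp_precomp_r (th T) (swap_point K A)).
  rw (eq_sym (tensm_split (counit_l M P T A K') (Fl A K K'))).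
  rw (vcomp_precomp_r (th T) (swap_point K A)).
  rw (eq_sym (HL A K K')).
  reflexivity.
Qed.

Lemma commutes_with_sym (V W : C) (J J' K K' : JO P)
    (mu : hom V (hh J J')) (nu : hom W (hh K K')) :
  commutes_with T mu nu -> commutes_with T nu mu.
Proof.
  intros Hmunu Fl Fr HL HR.
  pose proof (Hmunu _ _ (is_left_action_of_right Fr HR) (is_right_action_of_left Fl HL)) as kron_eq.
  unfold kron1, kron2, left_of_right_action, right_of_left_action in *.
  repeat rewrite compA in kron_eq.
  rewrite (rewrite_prefix2 (sigma_nat C M _ _ _ _ _ _)) in kron_eq. repeat rewrite compA in kron_eq.
  rewrite (vcomp_conj (th T) _ _ _ _ _ _ (swap_point_inv K J')) in kron_eq.
  rewrite (vcomp_conj (th T) _ _ _ _ _ _ (swap_point_inv K' J)) in kron_eq.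
  repeat rewrite compA in kron_eq.
  apply (cancel_split_epi (sigma M V W) (sigma M W V)); [apply sigma_sigma|].
  apply (cancel_split_mono (postcomp (th T) (swap_point K' J') ∘ precomp (th T) (swap_point J K))
                  (postcomp (th T) (swap_point J' K') ∘ precomp (th T) (swap_point K J))).
  { apply conj_inv; apply swap_point_inv. }
  norm. rw (eq_sym (sigma_nat C M _ _ _ _ mu nu)).
  rw (sigma_nat C M _ _ _ _ (Fr J K K') (Fl K' J J')).
  rw (sigma_sigma C M _ _). rewrite comp_id.
  rw (eq_sym (sigma_nat C M _ _ _ _ mu nu)).
  symmetry. exact kron_eq.
Qed.
End Swaps.
End SymmetricMonoidal.

Theorem proposition5p8 (C : Cat) (M : SMCC C) (P : Arities M) (T : Theory P)
    (V W : C) (J J' K K' : JO P)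
    (mu : hom V (vhom (th T) J J')) (nu : hom W (vhom (th T) K K')) :
  commutes_with T mu nu <-> commutes_with T nu mu.
Proof.
  split; apply commutes_with_sym.
Qed.
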